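(* An integer sequence $(a_n)_{n\ge1}$ is a strong Euler–Gauss sequence if and only if $\left(\frac{a_{p^rm}}{\gcd(a_{p^rm},a_{p^{r-1}m})}\right)^{-1}\equiv\left(\frac{a_{p^{r-1}m}}{\gcd(a_{p^rm},a_{p^{r-1}m})}\right)^{-1}\pmod{p^r}$ for all primes $p$ and all integers $r\ge1$, $m\ge1$.
   Context: $\mu$ is the Möbius function; $x^{-1}$ denotes the inverse of $x$ modulo the relevant modulus (the quotients are required to be invertible). For an integer sequence $(a_n)$ and $n\ge1$, $A_n^+=\prod_{d\mid n,\ \mu(d)=1} a_{n/d}$ and $A_n^-=\prod_{d\mid n,\ \mu(d)=-1} a_{n/d}$ (empty products equal $1$). An integer sequence is a strong Euler–Gauss sequence if for all $n\ge1$, $\left(\frac{A_n^-}{\gcd(A_n^+,A_n^-)}\right)^{-1}\equiv\left(\frac{A_n^+}{\gcd(A_n^+,A_n^-)}\right)^{-1}\pmod n$. *)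

From HB Require Import structures.
From mathcomp Require Import all_boot all_order all_algebra.
Set Implicit Arguments. Unset Strict Implicit. Unset Printing Implicit Defensive.
Import Order.TTheory GRing.Theory Num.Theory.
Local Open Scope ring_scope.

(* Möbius function: mu 0 = 0 (convention, never used), mu n = (-1)^k if n>0
   is squarefree with k prime factors, 0 otherwise. *)
Definition moebius (n : nat) : int :=
  if n == 0%N then 0
  else if all (fun pe : nat * nat => pe.2 == 1%N) (prime_decomp n)
       then (-1) ^+ size (primes n) else 0.

Definition Aplus (a : nat -> int) (n : nat) : int :=
  \prod_(d <- divisors n | moebius d == 1) a (n %/ d)%N.
Definition Aminus (a : nat -> int) (n : nat) : int :=
  \prod_(d <- divisors n | moebius d == -1) a (n %/ d)%N.

(* x^{-1} = y^{-1} (mod n), with x and y required to be invertible mod n: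
   there are inverses u of x and v of y modulo n, and u = v (mod n). *)
Definition inv_congr (n x y : int) : Prop :=
  exists u v : int,
    (x * u = 1 %[mod n])%Z /\ (y * v = 1 %[mod n])%Z /\ (u = v %[mod n])%Z.

Definition strong_EG (a : nat -> int) : Prop :=
  forall n : nat, (0 < n)%N ->
    let g := gcdz (Aplus a n) (Aminus a n) in
    inv_congr n%:Z (Aminus a n %/ g)%Z (Aplus a n %/ g)%Z.

From HB Require Import structures.
From mathcomp Require Import all_boot all_order all_algebra.
From mathcomp Require Import ring.
Import Order.TTheory GRing.Theory Num.Theory.
Set Implicit Arguments. Unset Strict Implicit.
Local Open Scope ring_scope.

(* For a prime p and k >= 1 write x ~ y (mod p^k) when x / y is a p-adic unit
   congruent to 1 modulo p^k.  This relation is reflexive, symmetric and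
   compatible with products and with cancellation of related factors, and the
   congruence (x/g)^-1 = (y/g)^-1 (mod n), g = gcd(x, y), holds exactly when
   x ~ y (mod q^(v_q n)) for every prime q | n.  For n = p^r m with p not
   dividing m, the squarefree divisors of n are the d and p d with d | m
   squarefree, and mu(p d) = -mu(d); hence A_n^+ / A_n^- is the product over
   d | m of (a_(p^r m/d) / a_(p^(r-1) m/d))^mu(d).  Modulo the conditions for
   the proper divisors m/d of m, the p-part of the condition at n is therefore
   the condition for (p, r, m).  Induction on m proves the equivalence for m
   prime to p, and an arbitrary m is reduced to that case by moving its p-part
   into r and weakening the modulus. *)

Lemma moebiusE n : (0 < n)%N -> moebius n =
  if all (fun q => logn q n == 1%N) (primes n) then (-1) ^+ size (primes n) else 0.
Proof. by case: n => // n _; rewrite /moebius /= prime_decompE all_map. Qed.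

Lemma moebius_neq0_gt0 n : moebius n != 0 -> (0 < n)%N.
Proof. by case: n. Qed.

Lemma moebius_pM p d : prime p -> (0 < d)%N -> ~~ (p %| d)%N ->
  moebius (p * d) = - moebius d.
Proof.
move=> p_pr d_gt0 pNd; have p_gt0 := prime_gt0 p_pr.
have primes_pd : perm_eq (primes (p * d)) (p :: primes d).
  apply: uniq_perm; rewrite ?primes_uniq //= ?mem_primes ?p_pr ?d_gt0 ?pNd ?primes_uniq //.
  by move=> q; rewrite primesM // primes_prime // in_cons inE orbF.
have logn_pd : {in primes d,
    (fun q => logn q (p * d) == 1%N) =1 (fun q => logn q d == 1%N)}.
  move=> q; rewrite mem_primes => /and3P[q_pr _ qd] /=; rewrite lognM // logn_prime //.
  by case: (q =P p) => [eq_qp|//]; rewrite -eq_qp qd in pNd.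
rewrite (moebiusE d_gt0) moebiusE ?muln_gt0 ?p_gt0 //.
rewrite (perm_size primes_pd) (perm_all _ primes_pd) /= (eq_in_all logn_pd).
rewrite lognM // logn_prime // eqxx logn_coprime ?prime_coprime //= exprS mulN1r.
by case: ifP; rewrite ?oppr0.
Qed.

Lemma moebius_pM_neq0 p d : prime p -> moebius (p * d) != 0 -> ~~ (p %| d)%N.
Proof.
move=> p_pr mu_pd; have pd_gt0 := moebius_neq0_gt0 mu_pd.
have d_gt0 : (0 < d)%N by move: pd_gt0; rewrite muln_gt0 => /andP[].
apply/negP => pd; move: mu_pd; rewrite moebiusE //.
case: allP => [/(_ p)|_]; last by rewrite eqxx.
rewrite mem_primes p_pr pd_gt0 dvdn_mulr //= => /(_ isT).
rewrite lognM ?(prime_gt0 p_pr) // (logn_prime _ p_pr) eqxx.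
have : (0 < logn p d)%N by rewrite logn_gt0 mem_primes p_pr d_gt0.
by case: (logn p d).
Qed.

Definition sqf_divisors n := [seq d <- divisors n | moebius d != 0].

Lemma big_sqf_divisors (F : nat -> int) n e : e != 0 ->
  \prod_(d <- divisors n | moebius d == e) F d =
  \prod_(d <- sqf_divisors n | moebius d == e) F d.
Proof.
move=> e_neq0; rewrite big_filter_cond; apply: eq_bigl => d.
by case: (moebius d =P e) => [->|]; rewrite ?e_neq0 ?andbF.
Qed.

Section PrimePowerTimesCoprime.
Variables (p r m : nat).
Hypotheses (p_pr : prime p) (r_gt0 : (0 < r)%N) (m_gt0 : (0 < m)%N).
Hypothesis p_m : coprime p m.

Let p_gt0 := prime_gt0 p_pr.
Let pr_gt0 : (0 < p ^ r * m)%N. Proof. by rewrite muln_gt0 expn_gt0 p_gt0. Qed.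
Let pexpS : (p ^ r = p * p ^ r.-1)%N. Proof. by rewrite -expnS prednK. Qed.

Lemma mem_sqf_divisors_pexpM d : (d \in sqf_divisors (p ^ r * m)) =
  (d \in sqf_divisors m) || (d \in map (muln p) (sqf_divisors m)).
Proof.
rewrite !mem_filter -!dvdn_divisors //; apply/idP/idP.
- case/andP=> mu_d d_pr; have [pd|pNd] := boolP (p %| d)%N; last first.
    by rewrite mu_d -(@Gauss_dvdr _ (p ^ r)) ?d_pr // coprime_sym coprimeXl ?prime_coprime.
  move: mu_d d_pr; have [e ->] := dvdnP pd; rewrite [(e * p)%N]mulnC => mu_pe.
  have pNe := moebius_pM_neq0 p_pr mu_pe.
  have e_gt0 : (0 < e)%N by move: (moebius_neq0_gt0 mu_pe); rewrite muln_gt0 => /andP[].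
  rewrite pexpS -mulnA dvdn_pmul2l // => e_pr.
  apply/orP; right; apply: map_f; rewrite mem_filter -dvdn_divisors //.
  rewrite -oppr_eq0 -(moebius_pM p_pr) // mu_pe /=.
  by rewrite -(@Gauss_dvdr _ (p ^ r.-1)) // coprime_sym coprimeXl ?prime_coprime.
- case/orP=> [/andP[-> dm] | /mapP[e]]; first exact: dvdn_mull.
  rewrite mem_filter -dvdn_divisors // => /andP[mu_e em] ->.
  have pNe : ~~ (p %| e)%N by rewrite -prime_coprime // (coprime_dvdr em).
  rewrite moebius_pM ?(dvdn_gt0 m_gt0) // oppr_eq0 mu_e /=.
  by rewrite pexpS -mulnA dvdn_pmul2l // dvdn_mull.
Qed.

Lemma perm_sqf_divisors_pexpM : perm_eq (sqf_divisors (p ^ r * m))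
  (sqf_divisors m ++ map (muln p) (sqf_divisors m)).
Proof.
have uniq_sqf n : uniq (sqf_divisors n) by rewrite filter_uniq ?divisors_uniq.
apply: uniq_perm => [||d]; rewrite ?mem_cat ?mem_sqf_divisors_pexpM //.
have mulpK : cancel (muln p) (divn^~ p) by move=> x; apply: mulKn.
rewrite cat_uniq uniq_sqf (map_inj_uniq (can_inj mulpK)) uniq_sqf andbT /=.
apply/hasPn => _ /mapP[e _ ->]; rewrite mem_filter -dvdn_divisors //.
apply/negP => /andP[_ pe_m]; move: p_m.
by rewrite prime_coprime // (dvdn_trans (dvdn_mulr e (dvdnn p)) pe_m).
Qed.

Lemma big_moebius_pexpM (F : nat -> int) e : e != 0 ->
  \prod_(d <- divisors (p ^ r * m) | moebius d == e) F ((p ^ r * m) %/ d)%N =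
  \prod_(d <- divisors m | moebius d == e) F (p ^ r * (m %/ d))%N *
  \prod_(d <- divisors m | moebius d == - e) F (p ^ r.-1 * (m %/ d))%N.
Proof.
move=> e_neq0; rewrite !big_sqf_divisors ?oppr_eq0 //.
rewrite (perm_big _ perm_sqf_divisors_pexpM) big_cat big_map /=; congr (_ * _).
  rewrite big_seq_cond [RHS]big_seq_cond; apply: eq_bigr => d.
  by rewrite mem_filter -dvdn_divisors // => /andP[/andP[_ dm] _]; rewrite muln_divA.
rewrite big_seq_cond [RHS]big_seq_cond; apply: eq_big => [d|d].
  case dm: (d \in _) => //=; move: dm; rewrite mem_filter -dvdn_divisors // => /andP[_ dm].
  have pNd : ~~ (p %| d)%N by rewrite -prime_coprime // (coprime_dvdr dm).
  by rewrite moebius_pM ?(dvdn_gt0 m_gt0) // eqr_oppLR.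
rewrite mem_filter -dvdn_divisors // => /andP[/andP[_ dm] _].
by rewrite pexpS -mulnA divnMl // muln_divA.
Qed.

End PrimePowerTimesCoprime.

Lemma coprimez_divgcd x y : x != 0 -> coprimez (x %/ gcdz x y)%Z (y %/ gcdz x y)%Z.
Proof.
move=> x_neq0; have g_neq0 : gcdz x y != 0 by rewrite gcdz_eq0 negb_and x_neq0.
apply/eqP; apply: (mulIf g_neq0); rewrite mul1r [LHS](mulz_gcdl _ _ (gcdz x y)).
by rewrite !divzK ?dvdz_gcdl ?dvdz_gcdr.
Qed.

(* x / y = s / t with t a p-adic unit and s = t (mod p ^ k). *)
Definition ratio_eq1 (p k : nat) (x y : int) : Prop :=
  [/\ x != 0, y != 0 & exists s t : int,
    [/\ x * t = y * s, ~~ (p%:Z %| t)%Z & ((p ^ k)%N%:Z %| s - t)%Z]].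

Lemma ratio_eq1_leq p k k' x y : (k' <= k)%N -> ratio_eq1 p k x y -> ratio_eq1 p k' x y.
Proof.
move=> le_k'k [x_neq0 y_neq0 [s [t [xt_ys pNt pk_st]]]].
split=> //; exists s, t; split=> //.
by apply: dvdz_trans pk_st; rewrite dvdzE /= dvdn_exp2l.
Qed.

Section RatioEq1.
Variables (p k : nat).
Hypothesis p_pr : prime p.

Let Euclidz a b : (p%:Z %| a * b)%Z = (p%:Z %| a)%Z || (p%:Z %| b)%Z.
Proof. by rewrite !dvdzE abszM Euclid_dvdM. Qed.

Lemma ratio_eq1_refl x : x != 0 -> ratio_eq1 p k x x.
Proof.
move=> x_neq0; split=> //; exists 1, 1.
by split; rewrite ?subrr ?dvdz0 // dvdzE Euclid_dvd1.
Qed.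

Lemma ratio_eq1M x y u v :
  ratio_eq1 p k x y -> ratio_eq1 p k u v -> ratio_eq1 p k (x * u) (y * v).
Proof.
move=> [x_neq0 y_neq0 [s [t [xt_ys pNt pk_st]]]].
move=> [u_neq0 v_neq0 [s' [t' [ut_vs pNt' pk_st']]]].
split; rewrite ?mulf_neq0 //; exists (s * s'), (t * t'); split.
- by rewrite mulrACA xt_ys ut_vs mulrACA.
- by rewrite Euclidz negb_or pNt.
- have -> : s * s' - t * t' = s * (s' - t') + (s - t) * t' by ring.
  by rewrite rpredD ?(dvdz_mull _ pk_st') ?(dvdz_mulr _ pk_st).
Qed.

Lemma big_ratio_eq1 (I : eqType) (r : seq I) (P : pred I) (F G : I -> int) :
  (forall i, i \in r -> P i -> ratio_eq1 p k (F i) (G i)) ->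
  ratio_eq1 p k (\prod_(i <- r | P i) F i) (\prod_(i <- r | P i) G i).
Proof.
move=> FG; rewrite big_seq_cond [X in ratio_eq1 _ _ _ X]big_seq_cond.
apply: (big_ind2 (ratio_eq1 p k)) => [|x y u v|i /andP[]]; last exact: FG.
  exact: ratio_eq1_refl.
exact: ratio_eq1M.
Qed.

Hypothesis k_gt0 : (0 < k)%N.

Let ndvdz_congr s t :
  ~~ (p%:Z %| t)%Z -> ((p ^ k)%N%:Z %| s - t)%Z -> ~~ (p%:Z %| s)%Z.
Proof.
move=> pNt pk_st; apply: contraNN pNt => ps.
have p_pk : (p%:Z %| (p ^ k)%N%:Z)%Z by exact: dvdn_exp k_gt0 (dvdnn p).
by rewrite -[t](subKr s) rpredB // (dvdz_trans p_pk).
Qed.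

Lemma ratio_eq1_sym x y : ratio_eq1 p k x y -> ratio_eq1 p k y x.
Proof.
move=> [x_neq0 y_neq0 [s [t [xt_ys pNt pk_st]]]]; split=> //; exists t, s.
by rewrite -xt_ys -opprB rpredN (ndvdz_congr pNt pk_st).
Qed.

Lemma ratio_eq1_mul2r x y u v : ratio_eq1 p k u v ->
  ratio_eq1 p k (x * u) (y * v) <-> ratio_eq1 p k x y.
Proof.
move=> uv; split=> [|xy]; last exact: ratio_eq1M.
case: uv => u_neq0 v_neq0 [s [t [ut_vs pNt pk_st]]].
case; rewrite !mulf_eq0 !negb_or => /andP[x_neq0 _] /andP[y_neq0 _].
move=> [S [T [xuT_yvS pNT pk_ST]]].
split=> //; exists (S * t), (s * T); split.
- apply: (mulIf u_neq0); transitivity (x * u * T * s); first by ring.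
  rewrite xuT_yvS; transitivity (y * S * (v * s)); first by ring.
  by rewrite -ut_vs; ring.
- by rewrite Euclidz negb_or (ndvdz_congr pNt pk_st).
- have -> : S * t - s * T = (S - T) * t - T * (s - t) by ring.
  by rewrite rpredB ?(dvdz_mulr _ pk_ST) ?(dvdz_mull _ pk_st).
Qed.

Lemma ratio_eq1_coprimeP x y : coprimez x y ->
  ratio_eq1 p k x y <-> ~~ (p%:Z %| x)%Z /\ ((p ^ k)%N%:Z %| x - y)%Z.
Proof.
move=> co_xy; split=> [[x_neq0 y_neq0 [s [t [xt_ys pNt pk_st]]]] | [pNx pk_xy]].
  have [c s_cx] : exists c, s = c * x.
    by apply/dvdzP; rewrite -(Gauss_dvdzr _ co_xy) -xt_ys dvdz_mulr.
  have t_cy : t = c * y by apply: (mulfI x_neq0); rewrite xt_ys s_cx; ring.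
  have pNs := ndvdz_congr pNt pk_st.
  move: pNs pNt pk_st; rewrite s_cx t_cy -mulrBr !Euclidz !negb_or.
  move=> /andP[pNc pNx] /andP[_ pNy]; split=> //.
  by rewrite -(Gauss_dvdzr _ (n := c)) // coprimezE coprime_pexpl ?prime_coprime.
have pNy : ~~ (p%:Z %| y)%Z by apply: ndvdz_congr pNx _; rewrite -opprB rpredN.
split; [by apply: contraNneq pNx => ->| by apply: contraNneq pNy => ->|].
by exists x, y; rewrite mulrC.
Qed.

Lemma ratio_eq1_divgcdP x y : ratio_eq1 p k x y <->
  ~~ (p%:Z %| (x %/ gcdz x y)%Z)%Z /\
  ((p ^ k)%N%:Z %| (x %/ gcdz x y)%Z - (y %/ gcdz x y)%Z)%Z.
Proof.
have [-> | x_neq0] := eqVneq x 0.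
  by rewrite div0z dvdz0; split=> [[]|[]]; rewrite ?eqxx.
have g_neq0 : gcdz x y != 0 by rewrite gcdz_eq0 negb_and x_neq0.
rewrite -(ratio_eq1_coprimeP (coprimez_divgcd y x_neq0)).
have := ratio_eq1_mul2r (x %/ gcdz x y)%Z (y %/ gcdz x y)%Z (ratio_eq1_refl g_neq0).
by rewrite !divzK ?dvdz_gcdl ?dvdz_gcdr.
Qed.

End RatioEq1.

Lemma inv_congr_sym n x y : inv_congr n x y -> inv_congr n y x.
Proof. by case=> u [v [xu [yv uv]]]; exists v, u. Qed.

Lemma inv_congrP n x y : inv_congr n x y <-> coprimez x n /\ (n %| x - y)%Z.
Proof.
split=> [[u [v [/eqP xu [/eqP yv /eqP uv]]]] | [/coprimezP[[u w] /= uw] n_xy]].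
  move: xu yv uv; rewrite !eqz_mod_dvd => n_xu n_yv n_uv; split.
    have [c xu_cn] := dvdzP n_xu; apply/coprimezP; exists (u, - c) => /=.
    by rewrite mulNr -xu_cn; ring.
  have -> : x - y = - x * (y * v - 1) + y * (x * u - 1) - x * y * (u - v) by ring.
  by rewrite rpredB ?rpredD ?dvdz_mull.
have n_xu : (n %| x * u - 1)%Z by apply/dvdzP; exists (- w); rewrite -uw; ring.
exists u, u; split; first by apply/eqP; rewrite eqz_mod_dvd.
split=> //; apply/eqP; rewrite eqz_mod_dvd.
have -> : y * u - 1 = (x * u - 1) - (x - y) * u by ring.
by rewrite rpredB ?dvdz_mulr.
Qed.

Lemma coprimez_primesP x n : (0 < n)%N ->
  coprimez x n <-> {in primes n, forall q, ~~ (q%:Z %| x)%Z}.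
Proof.
move=> n_gt0; rewrite coprimezE /=; split=> [co_xn q | qNx].
  rewrite mem_primes => /and3P[q_pr _ qn]; apply/negP => qx.
  by move: (coprime_dvdl qx co_xn); rewrite prime_coprime // qn.
apply: contraT; rewrite /coprime eqn_leq gcdn_gt0 n_gt0 orbT andbT -ltnNge.
move=> /pdiv_prime q_pr.
have /qNx : pdiv (gcdn `|x| n) \in primes n.
  by rewrite mem_primes q_pr n_gt0 (dvdn_trans (pdiv_dvd _)) ?dvdn_gcdr.
by rewrite dvdzE (dvdn_trans (pdiv_dvd _)) ?dvdn_gcdl.
Qed.

Lemma dvdz_primesP z n : (0 < n)%N ->
  (n%:Z %| z)%Z <-> {in primes n, forall q, ((q ^ logn q n)%N%:Z %| z)%Z}.
Proof.
move=> n_gt0; rewrite dvdzE /=.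
split=> [/(dvdn_partP _ n_gt0) nz q /nz | nz]; first by rewrite -p_part.
by apply/(dvdn_partP _ n_gt0) => q /nz; rewrite p_part.
Qed.

Lemma inv_congr_divgcdP n x y : (0 < n)%N ->
  inv_congr n (x %/ gcdz x y)%Z (y %/ gcdz x y)%Z <->
  {in primes n, forall q, ratio_eq1 q (logn q n) x y}.
Proof.
move=> n_gt0; rewrite inv_congrP (coprimez_primesP _ n_gt0) (dvdz_primesP _ n_gt0).
have local q : q \in primes n -> ratio_eq1 q (logn q n) x y <->
    ~~ (q%:Z %| (x %/ gcdz x y)%Z)%Z /\
    ((q ^ logn q n)%N%:Z %| (x %/ gcdz x y)%Z - (y %/ gcdz x y)%Z)%Z.
  move=> qn; apply: ratio_eq1_divgcdP; last by rewrite logn_gt0.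
  by move: qn; rewrite mem_primes => /andP[].
split=> [[qNx q_xy] q qn | xy].
  by apply/(local q qn); split; [apply: qNx | apply: q_xy].
by split=> q qn; case: (local q qn) => /(_ (xy q qn)) [].
Qed.

Lemma inv_congr_pexp_divgcdP p k x y : prime p -> (0 < k)%N ->
  inv_congr (p ^ k)%N%:Z (x %/ gcdz x y)%Z (y %/ gcdz x y)%Z <-> ratio_eq1 p k x y.
Proof.
move=> p_pr k_gt0; rewrite inv_congr_divgcdP ?expn_gt0 ?prime_gt0 //.
rewrite primesX // primes_prime //.
split=> [/(_ p (mem_head p [::]))| pk q]; last rewrite inE => /eqP->; by rewrite pfactorK.
Qed.

Section StrongEulerGauss.
Variable a : nat -> int.

Lemma strong_EG_localP : strong_EG a <->
  forall n q, (0 < n)%N -> q \in primes n ->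
    ratio_eq1 q (logn q n) (Aplus a n) (Aminus a n).
Proof.
split=> [EG n q n_gt0 | loc n n_gt0 /=].
  by have /inv_congr_sym := EG n n_gt0; rewrite inv_congr_divgcdP //; apply.
by apply/inv_congr_sym; apply/inv_congr_divgcdP => // q; apply: loc.
Qed.

Lemma ratio_eq1_Apm_pexpM p r m : prime p -> (0 < r)%N -> (0 < m)%N -> coprime p m ->
  (forall d, (d %| m)%N -> (d < m)%N -> ratio_eq1 p r (a (p ^ r * d)) (a (p ^ r.-1 * d))) ->
  ratio_eq1 p r (Aplus a (p ^ r * m)) (Aminus a (p ^ r * m)) <->
  ratio_eq1 p r (a (p ^ r * m)) (a (p ^ r.-1 * m)).
Proof.
move=> p_pr r_gt0 m_gt0 p_m proper.
have quotients d : d \in divisors m -> d != 1%N ->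
    ratio_eq1 p r (a (p ^ r * (m %/ d))) (a (p ^ r.-1 * (m %/ d))).
  rewrite -dvdn_divisors // => dm d_neq1; have d_gt0 := dvdn_gt0 m_gt0 dm.
  by apply: proper; rewrite ?dvdn_div // ltn_Pdiv // ltn_neqAle eq_sym d_neq1.
have big_moebius1 (F : nat -> int) : \prod_(d <- divisors m | moebius d == 1) F d =
    F 1%N * \prod_(d <- [seq d <- divisors m | moebius d == 1] | d != 1%N) F d.
  by rewrite -big_filter (bigD1_seq 1%N) ?filter_uniq ?divisors_uniq // mem_filter divisor1.
rewrite /Aplus /Aminus !big_moebius_pexpM ?oppr_eq0 // opprK [X in ratio_eq1 _ _ _ X]mulrC.
rewrite ratio_eq1_mul2r //; last first.
  apply/ratio_eq1_sym/big_ratio_eq1 => // d dm /eqP mu_d; apply: quotients => //.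
  by apply: contra_eqN mu_d => /eqP->.
rewrite !big_moebius1 !divn1 ratio_eq1_mul2r //.
by apply: big_ratio_eq1 => // d; rewrite mem_filter => /andP[_ dm]; apply: quotients.
Qed.

Lemma ratio_eq1_of_strong_EG p r m : strong_EG a -> prime p -> (0 < r)%N -> (0 < m)%N ->
  ratio_eq1 p r (a (p ^ r * m)) (a (p ^ r.-1 * m)).
Proof.
move=> /strong_EG_localP EG p_pr r_gt0 m_gt0.
have coprime_case m' : (0 < m')%N -> coprime p m' -> forall r', (0 < r')%N ->
    ratio_eq1 p r' (a (p ^ r' * m')) (a (p ^ r'.-1 * m')).
  elim/ltn_ind: m' => m' IH m'_gt0 p_m' r' r'_gt0.
  apply/(ratio_eq1_Apm_pexpM p_pr r'_gt0 m'_gt0 p_m') => [d dm lt_dm|].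
    exact: IH d lt_dm (dvdn_gt0 m'_gt0 dm) (coprime_dvdr dm p_m') r' r'_gt0.
  have n_gt0 : (0 < p ^ r' * m')%N by rewrite muln_gt0 expn_gt0 prime_gt0.
  have := EG _ p n_gt0; rewrite [in logn _ _]mulnC logn_Gauss // pfactorK //; apply.
  by rewrite mem_primes p_pr n_gt0 dvdn_mulr // dvdn_exp.
have [m' p_m' m_def] := pfactor_coprime p_pr m_gt0; set s := logn p m in m_def.
have m'_gt0 : (0 < m')%N by move: m_gt0; rewrite m_def muln_gt0 => /andP[].
have -> : (p ^ r * m = p ^ (r + s) * m')%N by rewrite m_def mulnCA -expnD mulnC.
have -> : (p ^ r.-1 * m = p ^ (r + s).-1 * m')%N.
  by rewrite m_def mulnCA -expnD mulnC -{2}(prednK r_gt0) addSn.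
apply: (ratio_eq1_leq (leq_addr s r)).
by apply: coprime_case; rewrite ?addn_gt0 ?r_gt0.
Qed.

Lemma strong_EG_of_ratio_eq1 :
  (forall p r m, prime p -> (0 < r)%N -> (0 < m)%N ->
     ratio_eq1 p r (a (p ^ r * m)) (a (p ^ r.-1 * m))) ->
  strong_EG a.
Proof.
move=> loc; apply/strong_EG_localP => n q n_gt0 qn.
have q_pr : prime q by move: qn; rewrite mem_primes => /andP[].
have [m q_m n_def] := pfactor_coprime q_pr n_gt0.
have m_gt0 : (0 < m)%N by move: n_gt0; rewrite n_def muln_gt0 => /andP[].
have : (0 < logn q n)%N by rewrite logn_gt0.
move: (logn q n) n_def => r -> r_gt0; rewrite mulnC.
by apply/ratio_eq1_Apm_pexpM => // [d dm _|]; apply: loc => //; apply: dvdn_gt0 dm.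
Qed.

End StrongEulerGauss.

Theorem lemma1 (a : nat -> int) :
  strong_EG a <->
  (forall p r m : nat, prime p -> (0 < r)%N -> (0 < m)%N ->
     let x := a (p ^ r * m)%N in
     let y := a (p ^ r.-1 * m)%N in
     let g := gcdz x y in
     inv_congr (p ^ r)%N%:Z (x %/ g)%Z (y %/ g)%Z).
Proof.
split=> [EG p r m p_pr r_gt0 m_gt0 | loc].
  by apply/inv_congr_pexp_divgcdP => //; apply: ratio_eq1_of_strong_EG.
apply: strong_EG_of_ratio_eq1 => p r m p_pr r_gt0 m_gt0.
by apply/(inv_congr_pexp_divgcdP _ _ p_pr r_gt0); apply: loc.
Qed.
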